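(* Let $k\ge 2$ be an integer. Then $\alpha_{2k+t,\,k-1}=k$ for all integers $t\ge 0$.
   Context: Let $\mathbb{K}$ be a field. For $n\ge 3$, $Q_n$ is the cycle graph on vertices $1,\dots,n$ (edges $\{i,i+1\}$ for $1\le i\le n-1$ and $\{n,1\}$); $B_n$ is the simplicial complex on $\{0,\dots,n+1\}$ whose facets are $\{0,i,j\}$ and $\{n+1,i,j\}$ for each edge $\{i,j\}$ of $Q_n$ (boundary of the bipyramid over the $n$-gon); $I_{B_n}\subset R=\mathbb{K}[x_0,\dots,x_{n+1}]$ is its Stanley-Reisner ideal, generated by $\prod_{i\in\tau}x_i$ over non-faces $\tau$. For a homogeneous ideal $I$, $I^{(m)}=R\cap\bigcap_{P\in\mathrm{Ass}(I)}I^mR_P$, $\alpha(I)=\min\{t:I_t\ne0\}$, and $\alpha_{n,m}:=\alpha(I_{B_n}^{(m)})$. *)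

From HB Require Import structures.
From mathcomp Require Import all_boot all_order all_algebra.
From mathcomp Require Import mpoly.
Set Implicit Arguments. Unset Strict Implicit. Unset Printing Implicit Defensive.
Import Order.TTheory GRing.Theory.
Local Open Scope ring_scope.

Definition ideal_gen (R : comRingType) (S : R -> Prop) : R -> Prop :=
  fun p => exists (l : nat) (c g : 'I_l -> R),
    (forall i, S (g i)) /\ p = \sum_(i < l) c i * g i.

Definition ideal_pow (R : comRingType) (I : R -> Prop) (m : nat) : R -> Prop :=
  ideal_gen (fun p => exists g : 'I_m -> R, (forall i, I (g i)) /\ p = \prod_(i < m) g i).

Definition is_ideal (R : comRingType) (P : R -> Prop) : Prop :=
  [/\ P 0, (forall a b, P a -> P b -> P (a + b)) & (forall r a, P a -> P (r * a))].

Definition is_prime_ideal (R : comRingType) (P : R -> Prop) : Prop :=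
  [/\ is_ideal P, ~ P 1 & (forall a b, P (a * b) -> P a \/ P b)].

(* P \in Ass(I) : P is a prime ideal of the form (I : f) for some f in R. *)
Definition associated_prime (R : comRingType) (I P : R -> Prop) : Prop :=
  is_prime_ideal P /\ exists f : R, forall g, P g <-> I (g * f).

(* Symbolic power I^(m) = R ∩ ⋂_{P ∈ Ass(I)} I^m R_P.  For a domain R,
   g ∈ R lies in I^m R_P iff s g ∈ I^m for some s ∉ P. *)
Definition symbolic_power (R : comRingType) (I : R -> Prop) (m : nat) : R -> Prop :=
  fun g => forall P, associated_prime I P -> exists s, ~ P s /\ ideal_pow I m (s * g).

Definition homog_of_deg (n : nat) (K : fieldType) (d : nat) (p : {mpoly K[n]}) : bool :=
  all (fun m => mdeg m == d) (msupp p).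

Definition alpha_is (n : nat) (K : fieldType) (I : {mpoly K[n]} -> Prop) (a : nat) : Prop :=
  (exists p, I p /\ p != 0 /\ homog_of_deg a p) /\
  (forall t p, (t < a)%N -> I p -> homog_of_deg t p -> p = 0).

Definition cycle_edge (n i j : nat) : bool :=
  [&& (1 <= i <= n)%N, (1 <= j <= n)%N &
      [|| j == i.+1, i == j.+1, (i == 1%N) && (j == n) | (i == n) && (j == 1%N)]].

(* tau ⊆ {0,...,n+1} is a face of B_n: contained in some facet {0,i,j} or {n+1,i,j}. *)
Definition Bn_face (n : nat) (tau : {set 'I_n.+2}) : bool :=
  [exists i : 'I_n.+2, exists j : 'I_n.+2,
    cycle_edge n i j &&
    ((tau \subset [set v : 'I_n.+2 | val v \in [:: 0%N; val i; val j]]) ||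
     (tau \subset [set v : 'I_n.+2 | val v \in [:: n.+1; val i; val j]]))].

Definition I_B (K : fieldType) (n : nat) : {mpoly K[n.+2]} -> Prop :=
  ideal_gen (fun p => exists tau : {set 'I_n.+2},
                ~~ Bn_face tau /\ p = \prod_(i in tau) 'X_i).
Arguments I_B : clear implicits.

(* For a facet F of B_n let P_F be the prime ideal generated by the variables outside F.
   Substituting x_v T for x_v (v outside F) maps R into R[T], tracking the degree outside F.
   Every non-face leaves F, so I_{B_n} maps into T R[T] and I^m into T^m R[T]; since P_F is
   associated to I (P_F = I : x_F) and the substitution is multiplicative on a domain, every
   monomial of an element of I^(m) has degree at least m outside F.  A monomial of degree
   t > 0 has degree at most t - 1 outside a facet through one of its vertices, so for m > 0
   the symbolic power I^(m) contains no nonzero form of degree t <= m.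
   Conversely every associated prime of I lies in some P_F, and
   x_F^k x_1 x_3 ... x_(2k-1) = prod_l x_F x_(2l+1), where all but at most one x_(2l+1) lie
   outside F (a facet contains no two of the pairwise non-adjacent vertices 1, 3, ..., 2k-1
   when 2k <= n), and then x_F x_(2l+1) is a non-face monomial.  Hence x_1 x_3 ... x_(2k-1)
   is a form of degree k in I^(k-1). *)

From mathcomp Require Import all_boot all_order all_algebra.
From mathcomp Require Import mpoly zify.
Set Implicit Arguments. Unset Strict Implicit. Unset Printing Implicit Defensive.
Import GRing.Theory.
Local Open Scope ring_scope.

Section IdealGen.
Variable R : comNzRingType.
Implicit Types (S I : R -> Prop) (a b x : R).

Lemma ideal_gen0 S : ideal_gen S 0.
Proof. by exists 0%N, (fun _ => 0), (fun _ => 0); split; [case | rewrite big_ord0]. Qed.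

Lemma ideal_gen_sub S x : S x -> ideal_gen S x.
Proof.
by move=> Sx; exists 1%N, (fun _ => 1), (fun _ => x); rewrite big_ord1 mul1r.
Qed.

Lemma ideal_genD S a b : ideal_gen S a -> ideal_gen S b -> ideal_gen S (a + b).
Proof.
move=> [l1 [c1 [g1 [S1 ->]]]] [l2 [c2 [g2 [S2 ->]]]].
pose glue (T : Type) (u : 'I_l1 -> T) (v : 'I_l2 -> T) (i : 'I_(l1 + l2)) :=
  match split i with inl i => u i | inr i => v i end.
exists (l1 + l2)%N, (glue _ c1 c2), (glue _ g1 g2); split.
  by move=> i; rewrite /glue; case: (split i).
by rewrite big_split_ord /glue; congr (_ + _); apply: eq_bigr => i _;
  rewrite ?(unsplitK (inl _)) ?(unsplitK (inr _)).
Qed.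

Lemma ideal_genMl S r a : ideal_gen S a -> ideal_gen S (r * a).
Proof.
move=> [l [c [g [Sg ->]]]]; exists l, (fun i => r * c i), g; split => //.
by rewrite mulr_sumr; apply: eq_bigr => i _; rewrite mulrA.
Qed.

Lemma ideal_gen_is_ideal S : is_ideal (ideal_gen S).
Proof. by split; [apply: ideal_gen0 | apply: ideal_genD | apply: ideal_genMl]. Qed.

Lemma ideal_gen_sum S (T : eqType) (r : seq T) (F : T -> R) :
  {in r, forall i, ideal_gen S (F i)} -> ideal_gen S (\sum_(i <- r) F i).
Proof.
by move=> SF; rewrite big_seq; elim/big_ind: _ => //; [apply: ideal_gen0 | apply: ideal_genD].
Qed.

Lemma ideal_gen_ind S (Q : R -> Prop) :
  Q 0 -> (forall a b, Q a -> Q b -> Q (a + b)) -> (forall r x, S x -> Q (r * x)) ->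
  forall a, ideal_gen S a -> Q a.
Proof. by move=> Q0 QD QM a [l [c [g [Sg ->]]]]; elim/big_ind: _ => // i _; apply: QM. Qed.

Lemma ideal_pow0 I : ideal_pow I 0 1.
Proof. by apply: ideal_gen_sub; exists (fun _ => 0); split; [case | rewrite big_ord0]. Qed.

Lemma ideal_powMr I m a b : ideal_pow I m a -> I b -> ideal_pow I m.+1 (a * b).
Proof.
move=> Ia Ib; rewrite mulrC; elim/ideal_gen_ind: a / Ia.
- by rewrite mulr0; apply: ideal_gen0.
- by move=> a a' Ia Ia'; rewrite mulrDr; apply: ideal_genD.
move=> r _ [g [Ig ->]]; rewrite mulrCA; apply/ideal_genMl/ideal_gen_sub.
exists (fun i : 'I_m.+1 => if unlift ord0 i is Some j then g j else b); split.
  by move=> i; case: (unlift ord0 i).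
by rewrite big_ord_recl unlift_none; congr (_ * _); apply: eq_bigr => i _; rewrite liftK.
Qed.

Lemma ideal_pow_succ I m a : is_ideal I -> ideal_pow I m.+1 a -> ideal_pow I m a.
Proof.
move=> [_ _ IM] Ia; elim/ideal_gen_ind: a / Ia.
- exact: ideal_gen0.
- by move=> a b; apply: ideal_genD.
move=> r _ [g [Ig ->]]; apply: ideal_genMl.
case: m g Ig => [|m] g Ig.
  by rewrite -[X in ideal_gen _ X]mulr1; apply/ideal_genMl/ideal_pow0.
apply: ideal_gen_sub; rewrite big_ord_recl big_ord_recl mulrA.
exists (fun i : 'I_m.+1 => if unlift ord0 i is Some j then g (lift ord0 (lift ord0 j))
                         else g ord0 * g (lift ord0 ord0)); split.
  by move=> i; case: (unlift ord0 i) => [j|] //; apply: IM.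
by rewrite big_ord_recl unlift_none; congr (_ * _); apply: eq_bigr => i _; rewrite liftK.
Qed.

Lemma ideal_pow_le I m m' a : is_ideal I -> (m <= m')%N ->
  ideal_pow I m' a -> ideal_pow I m a.
Proof.
move=> idI /subnK <-; elim: (m' - m)%N => [|d IHd] //= Ia.
by apply/IHd/ideal_pow_succ.
Qed.

Lemma ideal_pow_prod I k (F : 'I_k -> R) (b : pred 'I_k) :
  (forall l, b l -> I (F l)) -> ideal_pow I (\sum_(l < k) b l) (\prod_(l < k) F l).
Proof.
elim: k F b => [|k IHk] F b IF; first by rewrite !big_ord0; apply: ideal_pow0.
rewrite !big_ord_recl /= mulrC addnC.
have IHF := IHk (fun l => F (lift ord0 l)) (fun l => b (lift ord0 l)) (fun l => IF _).
case: (b ord0) (IF ord0) => [/(_ isT) IF0|_]; first by rewrite addn1; apply: ideal_powMr.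
by rewrite [(_ + false)%N]addn0 mulrC; apply: ideal_genMl.
Qed.

End IdealGen.

Lemma sum_pairwise_orb_ge k (b : pred 'I_k) :
  (forall l1 l2, l1 != l2 -> b l1 || b l2) -> (k.-1 <= \sum_(l < k) b l)%N.
Proof.
move=> bP; case: (pickP (predC b)) => [l0 /= nb0|]; last first.
  by move=> bT; rewrite (eq_bigr (fun _ => 1%N)) ?sum1_card ?card_ord ?leq_pred // => l _;
     move/negbFE: (bT l) => ->.
rewrite (bigD1 l0) //= (negbTE nb0) (eq_bigr (fun _ => 1%N)) ?sum1_card ?cardC1 ?card_ord //.
by move=> l /(bP l l0); rewrite (negbTE nb0) orbF => ->.
Qed.

Section Bipyramid.
Variable n : nat.
Implicit Types (tau F : {set 'I_n.+2}) (i j v : 'I_n.+2).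

Definition Bn_facet F : Prop :=
  exists i j, cycle_edge n i j /\ (F = [set ord0; i; j] \/ F = [set ord_max; i; j]).

Lemma set_val3 (c i j : 'I_n.+2) : [set v | val v \in [:: val c; val i; val j]] = [set c; i; j].
Proof. by apply/setP => v; rewrite !inE !val_eqE orbA. Qed.

Lemma Bn_faceP tau : reflect (exists2 F, Bn_facet F & tau \subset F) (Bn_face tau).
Proof.
apply: (iffP existsP) => [[i /existsP [j /andP [ij]]] | [F [i [j [ij EF]]] tauF]].
  rewrite (set_val3 ord0) (set_val3 ord_max) => /orP [] sub.
    by exists [set ord0; i; j] => //; exists i, j; split => //; left.
  by exists [set ord_max; i; j] => //; exists i, j; split => //; right.
exists i; apply/existsP; exists j.
by rewrite ij (set_val3 ord0) (set_val3 ord_max); case: EF => <-; rewrite tauF ?orbT.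
Qed.

Lemma cycle_edgeP (a b : nat) : cycle_edge n a b ->
  [/\ (0 < a <= n)%N, (0 < b <= n)%N &
      [\/ b = a.+1, a = b.+1, a = 1%N /\ b = n | a = n /\ b = 1%N]].
Proof.
case/and3P => ra rb /or4P e; split => //.
by case: e => [/eqP|/eqP|/andP [/eqP ? /eqP ?]|/andP [/eqP ? /eqP ?]]; constructor.
Qed.

Lemma Bn_facet_card F : (2 <= n)%N -> Bn_facet F -> #|F| = 3.
Proof.
move=> n2 [i [j [/cycle_edgeP [ri rj e] EF]]].
by case: EF => ->; rewrite setUC cardsU1 cards2 !inE negb_or -!val_eqE /=; case: e; lia.
Qed.

Lemma Bn_face_card tau : (2 <= n)%N -> Bn_face tau -> (#|tau| <= 3)%N.
Proof.
by move=> n2 /Bn_faceP [F facF /subset_leq_card]; rewrite (Bn_facet_card n2 facF).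
Qed.

Lemma Bn_facet_face F : Bn_facet F -> Bn_face F.
Proof. by move=> facF; apply/Bn_faceP; exists F. Qed.

Lemma Bn_facet_maximal F v : (2 <= n)%N -> Bn_facet F -> v \notin F -> ~~ Bn_face (v |: F).
Proof.
move=> n2 facF vF; apply/negP => /(Bn_face_card n2).
by rewrite cardsU1 vF (Bn_facet_card n2 facF).
Qed.

Lemma Bn_facet_cover v : (2 <= n)%N -> exists2 F, Bn_facet F & v \in F.
Proof.
move=> n2; pose a := if (1 < v <= n)%N then v.-1 else 1%N.
have a_lt : (0 < a < n)%N by rewrite /a; case: ifP; lia.
pose c : 'I_n.+2 := if val v == n.+1 then ord_max else ord0.
exists [set c; inord a; inord a.+1].
  exists (inord a), (inord a.+1); split; last by rewrite /c; case: eqP; [right | left].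
  by rewrite !inordK /cycle_edge ?eqxx ?orbT //=; lia.
rewrite !inE /c; have [vmax | vnmax] := eqVneq (val v) n.+1.
  by rewrite (_ : v = ord_max) ?eqxx //; apply: val_inj.
rewrite -!val_eqE /= !inordK /a; try lia.
by move: vnmax (ltn_ord v) => /=; case: ifP; lia.
Qed.

End Bipyramid.

Lemma rmorph_ker_prime (R : comNzRingType) (S : idomainType) (f : {rmorphism R -> S}) :
  is_prime_ideal (fun a => f a = 0).
Proof.
split; first split.
- exact: rmorph0.
- by move=> a b fa fb; rewrite rmorphD fa fb addr0.
- by move=> r a fa; rewrite rmorphM fa mulr0.
- by rewrite rmorph1 => /eqP; rewrite oner_eq0.
- by move=> a b /eqP; rewrite rmorphM mulf_eq0 => /orP [] /eqP; [left | right].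
Qed.

Lemma polyXn_dvd_cancel (R : idomainType) r (a b q : {poly R}) :
  a`_0 != 0 -> a * b = 'X ^+ r * q -> exists q', b = 'X ^+ r * q'.
Proof.
move=> a0; elim: r b q => [|r IHr] b q; first by exists b; rewrite expr0 mul1r.
move=> abq; have b0 : b`_0 = 0.
  by move/(congr1 (coefp 0)): abq => /= /eqP; rewrite coef0M coefXnM mulf_eq0 (negbTE a0) => /eqP.
have [b' Eb] : exists b', b = 'X * b'.
  by exists (\poly_(i < size b) b`_i.+1); apply/polyP => -[|i];
     rewrite coefXM //= coef_poly; case: ltnP => // sb; rewrite nth_default // ltnW.
move: abq; rewrite Eb exprS mulrCA -mulrA => /(mulfI (negbT (polyX_eq0 _))) /IHr [q' ->].
by exists q'; rewrite mulrA.
Qed.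

Lemma prod_polyX_dvd (R : comNzRingType) r (g : 'I_r -> {poly R}) :
  (forall i, exists q, g i = 'X * q) -> exists q, \prod_(i < r) g i = 'X ^+ r * q.
Proof.
move=> /fin_all_exists [q Eq]; exists (\prod_(i < r) q i).
by rewrite (eq_bigr _ (fun i _ => Eq i)) big_split prodr_const card_ord.
Qed.

Lemma mpolyX_neq0 (R : nzRingType) N (m : 'X_{1..N}) : 'X_[m] != 0 :> {mpoly R[N]}.
Proof. by rewrite -msupp_eq0 msuppX. Qed.

Lemma prod_mpolyXU_neq0 (R : idomainType) N (A : {pred 'I_N}) :
  \prod_(i in A) 'X_i != 0 :> {mpoly R[N]}.
Proof. by apply/prodf_neq0 => i _; apply: mpolyX_neq0. Qed.

Lemma homog_of_deg_mpolyX (K : fieldType) N d (m : 'X_{1..N}) :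
  mdeg m = d -> homog_of_deg d ('X_[m] : {mpoly K[N]}).
Proof. by move=> <-; rewrite /homog_of_deg msuppX /= eqxx. Qed.

Lemma prod_mpolyXU (R : nzRingType) N k (g : 'I_k -> 'I_N) :
  \prod_(l < k) 'X_(g l) = 'X_[\sum_(l < k) U_(g l)] :> {mpoly R[N]}.
Proof. by rewrite (big_morph _ (@mpolyXD _ R) (mpolyX0 _ R)). Qed.

Lemma mdeg_sum_mnm1 N k (g : 'I_k -> 'I_N) : mdeg (\sum_(l < k) U_(g l))%MM = k.
Proof.
by rewrite mdeg_sum (eq_bigr (fun _ => 1%N)) ?sum1_card ?card_ord // => l _; rewrite mdeg1.
Qed.

Definition mnmsupp N (m : 'X_{1..N}) : {set 'I_N} := [set i | (0 < m i)%N].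

Section Grading.
Variables (K : idomainType) (N : nat) (F : {set 'I_N}).
Local Notation P := {mpoly K[N]}.

Definition outdeg (m : 'X_{1..N}) : nat := (\sum_(i < N | i \notin F) m i)%N.

Definition grade_var (i : 'I_N) : {poly P} := ('X_i)%:P * 'X ^+ (i \notin F).

Definition grade : {rmorphism P -> {poly P}} := mmap ((@polyC P) \o (@mpolyC N K)) grade_var.

Lemma gradeE p : grade p = mmap ((@polyC P) \o (@mpolyC N K)) grade_var p.
Proof. by []. Qed.

Lemma grade_mpolyX m : grade 'X_[m] = 'X_[m]%:P * 'X ^+ outdeg m.
Proof.
rewrite gradeE mmapX /mmap1 /grade_var mpolyXE_id rmorph_prod /outdeg -prodrXr.
rewrite [X in _ * X]big_mkcond -big_split /=; apply: eq_bigr => i _.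
by rewrite exprMn rmorphXn -exprM; case: (i \notin F); rewrite ?mul1n ?mul0n ?expr0.
Qed.

Lemma grade_mpolyC c : grade c%:MP = (c%:MP)%:P.
Proof. by rewrite gradeE mmapC. Qed.

Lemma mcoeff_coef_grade p j m : ((grade p)`_j)@_m = if outdeg m == j then p@_m else 0.
Proof.
rewrite {1}(mpolyE p) rmorph_sum coef_sum raddf_sum /=.
rewrite (eq_bigr (fun m' => if m' == m then if outdeg m == j then p@_m else 0 else 0));
  last first.
  move=> m' _; rewrite -mul_mpolyC rmorphM grade_mpolyC grade_mpolyX mulrA -rmorphM.
  rewrite mul_polyC coefZ coefXn mulr_natr raddfMn /= mul_mpolyC mcoeffZ mcoeffX.
  by case: eqP => [->|_]; rewrite ?mulr1 ?mulr0 ?mul0rn // eq_sym; case: eqP.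
case: (boolP (m \in msupp p)) => [mp | /memN_msupp_eq0 ->]; last first.
  by rewrite big1 ?if_same // => m' _; case: eqP.
rewrite (bigD1_seq m) ?msupp_uniq //= eqxx big1 ?addr0 // => m' /negbTE -> //.
Qed.

Lemma grade_ideal_gen (S : P -> Prop) r p :
  (forall x, S x -> exists q, grade x = 'X ^+ r * q) ->
  ideal_gen S p -> exists q, grade p = 'X ^+ r * q.
Proof.
move=> SX; elim/ideal_gen_ind => [|a b [qa Ea] [qb Eb]|c x /SX [q Eq]].
- by exists 0; rewrite rmorph0 mulr0.
- by exists (qa + qb); rewrite rmorphD Ea Eb mulrDr.
- by exists (grade c * q); rewrite rmorphM Eq mulrCA.
Qed.

Lemma grade_mpolyXU i : grade 'X_i = grade_var i.
Proof. by rewrite gradeE mmapX mmap1U. Qed.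

(* Sets the variables outside [F] to 0: its kernel is the prime P_F. *)
Definition zero_out : {rmorphism P -> P} := horner_eval 0 \o grade.

Lemma mcoeff_zero_out p m : (zero_out p)@_m = if outdeg m == 0%N then p@_m else 0.
Proof. by rewrite /= -gradeE horner_evalE horner_coef0 mcoeff_coef_grade. Qed.

Lemma zero_out_eq0 p : zero_out p = 0 <-> {in msupp p, forall m, outdeg m != 0%N}.
Proof.
split=> [p0 m mp | outp]; last first.
  apply/mpolyP => m; rewrite mcoeff_zero_out mcoeff0.
  by case: (boolP (m \in msupp p)) => [/outp/negbTE -> | /memN_msupp_eq0 ->]; rewrite ?if_same.
apply/negP => /eqP m0; move: (mcoeff_zero_out p m); rewrite p0 m0 mcoeff0 eqxx => /esym/eqP.
by rewrite mcoeff_eq0 mp.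
Qed.

Lemma zero_out_mpolyXU i : i \in F -> zero_out 'X_i = 'X_i.
Proof.
by move=> iF; rewrite /= -gradeE grade_mpolyXU /grade_var iF mulr1 horner_evalE hornerC.
Qed.

Lemma zero_out_prodX : zero_out (\prod_(i in F) 'X_i) = \prod_(i in F) 'X_i.
Proof. by rewrite rmorph_prod; apply: eq_bigr => i; apply: zero_out_mpolyXU. Qed.

Lemma outdeg_neq0P m : outdeg m != 0%N -> exists2 i, i \notin F & (0 < m i)%N.
Proof.
rewrite /outdeg sum_nat_eq0 negb_forall => /existsP [i]; rewrite negb_imply -lt0n.
by case/andP; exists i.
Qed.

Lemma outdeg_addn_le m i : i \in F -> (outdeg m + m i <= mdeg m)%N.
Proof.
move=> iF; rewrite mdegE (bigID (fun j => j \notin F)) /= leq_add2l.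
by rewrite (bigD1 i) ?iF //= leq_addr.
Qed.

End Grading.

Arguments grade {K N} F.
Arguments zero_out {K N} F.

Section StanleyReisner.
Variables (K : fieldType) (n : nat).
Hypothesis n_ge2 : (2 <= n)%N.
Local Notation P := {mpoly K[n.+2]}.
Local Notation I := (I_B K n).
Implicit Types (tau F : {set 'I_n.+2}) (p h : P).

Lemma I_B_is_ideal : is_ideal I.
Proof. exact: ideal_gen_is_ideal. Qed.

Lemma I_B_prod_nonface tau : ~~ Bn_face tau -> I (\prod_(v in tau) 'X_v).
Proof. by move=> tau_nf; apply: ideal_gen_sub; exists tau. Qed.

Lemma I_B_mpolyX m : ~~ Bn_face (mnmsupp m) -> I 'X_[m].
Proof.
move=> supp_nf; set S := mnmsupp m; rewrite mpolyXE_id.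
rewrite (eq_bigr (fun i => 'X_i ^+ (m i - (i \in S)) * 'X_i ^+ (i \in S))); last first.
  by move=> i _; rewrite -exprD subnK // inE; case: (m i).
rewrite big_split /= [X in _ * X](eq_bigr (fun i => if i \in S then 'X_i else 1)).
  by rewrite -big_mkcond; apply/ideal_genMl/I_B_prod_nonface.
by move=> i _; case: (i \in S).
Qed.

Lemma I_B_of_msupp p : {in msupp p, forall m, ~~ Bn_face (mnmsupp m)} -> I p.
Proof.
move=> supp_nf; rewrite (mpolyE p); apply: ideal_gen_sum => m /supp_nf.
by rewrite -mul_mpolyC => /I_B_mpolyX; apply: ideal_genMl.
Qed.

Lemma grade_I_B F p : Bn_face F -> I p -> exists q, grade F p = 'X * q.
Proof.
move=> faceF; rewrite -(expr1 'X); apply: grade_ideal_gen.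
move=> _ [tau [tau_nf ->]].
have [v vtau vF] : exists2 v, v \in tau & v \notin F.
  apply/exists_inP; rewrite -negb_forall_in; apply: contra tau_nf => /forall_inP tauF.
  case/Bn_faceP: faceF => G facG FG; apply/Bn_faceP; exists G => //.
  by apply: subset_trans FG; apply/subsetP => x /tauF.
rewrite (rmorph_prod (grade F)) (bigD1 v) //= grade_mpolyXU /grade_var vF expr1.
by exists (('X_v)%:P * \prod_(i in tau | i != v) grade F 'X_i); rewrite mulrCA mulrA.
Qed.

Lemma grade_I_B_pow F r p : Bn_face F -> ideal_pow I r p -> exists q, grade F p = 'X ^+ r * q.
Proof.
move=> faceF; apply: grade_ideal_gen => _ [g [Ig ->]].
by rewrite rmorph_prod; apply: prod_polyX_dvd => i; apply: grade_I_B.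
Qed.

Lemma zero_out_I_B F p : Bn_face F -> I p -> zero_out F p = 0.
Proof.
move=> faceF /(grade_I_B faceF) [q Eq].
by rewrite /= -gradeE Eq horner_evalE horner_coef0 coefXM.
Qed.

Lemma associated_zero_out F : Bn_facet F -> associated_prime I (fun h => zero_out F h = 0).
Proof.
move=> facF; split; first exact: rmorph_ker_prime.
exists (\prod_(v in F) 'X_v) => h.
split=> [/zero_out_eq0 h_out | /(zero_out_I_B (Bn_facet_face facF))].
  rewrite (mpolyE h) mulr_suml; apply: ideal_gen_sum => m /h_out /outdeg_neq0P [v vF mv].
  have -> : 'X_[m] = 'X_[m - U_(v)] * 'X_v :> P.
    by rewrite -mpolyXD submK //; apply/mnm_lepP => i; rewrite mnm1E; case: eqP => // <-.
  rewrite -mul_mpolyC -!mulrA; apply/ideal_genMl/ideal_genMl.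
  by rewrite -big_setU1 //=; apply/I_B_prod_nonface/Bn_facet_maximal.
rewrite rmorphM zero_out_prodX => /eqP.
by rewrite mulf_eq0 (negbTE (prod_mpolyXU_neq0 _ _)) orbF => /eqP.
Qed.

Lemma associated_sub_zero_out Q : associated_prime I Q ->
  exists2 F, Bn_facet F & forall h, Q h -> zero_out F h = 0.
Proof.
move=> [[_ Q1 _] [f Qf]].
have [m mf face_m] : exists2 m, m \in msupp f & Bn_face (mnmsupp m).
  apply/hasP; apply/negPn/negP => /hasPn nf; apply: Q1; apply/Qf; rewrite mul1r.
  exact: I_B_of_msupp.
case/Bn_faceP: face_m => F facF mF; exists F => // h /Qf /(zero_out_I_B (Bn_facet_face facF)).
rewrite rmorphM => /eqP; rewrite mulf_eq0 => /orP [/eqP // | /eqP /zero_out_eq0 /(_ m mf)].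
case/outdeg_neq0P => v vF mv; move/subsetP: mF => /(_ v); rewrite inE mv => /(_ isT).
by rewrite (negbTE vF).
Qed.

Lemma symbolic_power_outdeg F r p m : Bn_facet F -> symbolic_power I r p ->
  m \in msupp p -> (r <= outdeg F m)%N.
Proof.
move=> facF /(_ _ (associated_zero_out facF)) [s [s_out spI]] mp.
have [q] := grade_I_B_pow (Bn_facet_face facF) spI.
rewrite rmorphM => /polyXn_dvd_cancel [|q' Eq].
  by apply/eqP; rewrite -horner_coef0 -horner_evalE gradeE.
rewrite leqNgt; apply/negP => out_lt.
move: (mcoeff_coef_grade F p (outdeg F m) m); rewrite Eq coefXnM out_lt mcoeff0 eqxx.
by move/esym/eqP; rewrite mcoeff_eq0 mp.
Qed.

Lemma Bn_facet_outdeg_le (m : 'X_{1..n.+2}) :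
  exists2 F, Bn_facet F & (outdeg F m <= (mdeg m).-1)%N.
Proof.
case: (pickP (fun v => 0 < m v)%N) => [v mv | m0].
  have [F facF vF] := Bn_facet_cover v n_ge2.
  by exists F => //; have := outdeg_addn_le m vF; lia.
have [F facF _] := Bn_facet_cover ord0 n_ge2; exists F => //.
suff -> : m = 0%MM by rewrite /outdeg big1 // => i _; rewrite mnm0E.
by apply/mnmP => i; rewrite mnm0E; move: (m0 i) => /= /negbT; rewrite -leqNgt leqn0 => /eqP.
Qed.

Lemma symbolic_power_homog_eq0 r t p : (0 < r)%N -> (t <= r)%N ->
  symbolic_power I r p -> homog_of_deg t p -> p = 0.
Proof.
move=> r_gt0 tr sp /allP homp; apply/eqP; rewrite -msupp_eq0.
case E : (msupp p) => [//|m s]; have mp : m \in msupp p by rewrite E mem_head.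
have [F facF out_le] := Bn_facet_outdeg_le m.
have := symbolic_power_outdeg facF sp mp; move: out_le; rewrite (eqP (homp m mp)); lia.
Qed.

End StanleyReisner.

Lemma symbolic_power_odd_vertices (K : fieldType) n k : (0 < k)%N -> (2 * k <= n)%N ->
  symbolic_power (I_B K n) (k - 1) (\prod_(l < k) 'X_(inord (2 * l + 1))).
Proof.
move=> k_gt0 kn Q /associated_sub_zero_out [F facF QF].
pose a (l : 'I_k) : 'I_n.+2 := inord (2 * l + 1).
have val_a l : nat_of_ord (a l) = (2 * l + 1)%N by rewrite inordK //; have := ltn_ord l; lia.
exists ((\prod_(v in F) 'X_v) ^+ k); split.
  move/QF/eqP; rewrite rmorphXn zero_out_prodX expf_eq0 (negbTE (prod_mpolyXU_neq0 _ _)).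
  by rewrite andbF.
have a_notin_F l1 l2 : l1 != l2 -> (a l1 \notin F) || (a l2 \notin F).
  rewrite -val_eqE => /= l12; move: facF (ltn_ord l1) (ltn_ord l2).
  move=> [i [j [/cycle_edgeP [ri rj e] EF]]] l1k l2k.
  rewrite -negb_and; apply/negP => /andP [].
  by case: EF => ->; rewrite !inE -!val_eqE /= !val_a; case: e; lia.
rewrite (_ : _ ^+ k = \prod_(l < k) \prod_(v in F) 'X_v); last by rewrite prodr_const card_ord.
rewrite -big_split subn1; apply: (ideal_pow_le (I_B_is_ideal K n) (sum_pairwise_orb_ge a_notin_F)).
apply: ideal_pow_prod => l aF; rewrite /= mulrC -big_setU1 //=.
by apply/I_B_prod_nonface/Bn_facet_maximal => //; lia.
Qed.

Theorem proposition3p15 (K : fieldType) (k t : nat) :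
  (2 <= k)%N ->
  alpha_is (symbolic_power (I_B K (2 * k + t)) (k - 1)) k.
Proof.
move=> k2; split; last by move=> t' p t'k; apply: symbolic_power_homog_eq0; lia.
exists (\prod_(l < k) 'X_(inord (2 * l + 1))); split.
  by apply: symbolic_power_odd_vertices; lia.
rewrite prod_mpolyXU mpolyX_neq0; split=> //.
by apply/homog_of_deg_mpolyX/mdeg_sum_mnm1.
Qed.
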